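(* Let $p\in(0,1)$ and $\varepsilon>0$. Let $n<m$ be positive integers with $b=n/m$. With probability $1-\exp(-\Omega_\varepsilon(n))$, a random linear rank metric code $\mathcal{C}\subseteq\mathbb{F}_2^{m\times n}$ of rate $R=(1-p)(1-bp)-\varepsilon$ satisfies $S_{\mathcal{C}}\le2$.
   Context: $\mathcal{B}_R(X,pn)=\{Z\in\mathbb{F}_2^{m\times n}:\mathrm{rank}(X-Z)\le pn\}$; $L_{\mathcal{C}}(X)=|\mathcal{B}_R(X,pn)\cap\mathcal{C}|$; $A_{\mathcal{C}}(X)=2^{\frac{\varepsilon}{1+\varepsilon}nL_{\mathcal{C}}(X)}$; $S_{\mathcal{C}}=\mathbb{E}_{X\sim\mathbb{F}_2^{m\times n}}[A_{\mathcal{C}}(X)]$ ($X$ uniform). A random linear rank metric code of rate $R$ is $\mathrm{span}_{\mathbb{F}_2}(Y_1,\dots,Y_k)$ with $k=Rmn$ (an integer) and $Y_i$ independent uniform in $\mathbb{F}_2^{m\times n}$. The statement is for $m,n$ sufficiently large. *)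

From HB Require Import structures.
From mathcomp Require Import all_boot all_order all_algebra all_field.
From Stdlib Require Import Reals.
Set Implicit Arguments. Unset Strict Implicit. Unset Printing Implicit Defensive.

Notation F2 := 'F_2.
Notation mat m n := 'M[F2]_(m, n).

(* A random linear code is given by its k generators Y_1..Y_k. *)
Definition gens (m n k : nat) := {ffun 'I_k -> mat m n}.

Section Lin.
Local Open Scope ring_scope.
Definition lincomb (m n k : nat) (Y : gens m n k) (c : {ffun 'I_k -> F2}) : mat m n :=
  \sum_(i < k) c i *: Y i.
Definition rk_diff (m n : nat) (X Z : mat m n) : nat := \rank (X - Z).
End Lin.

Definition span_code (m n k : nat) (Y : gens m n k) : {set mat m n} :=
  [set lincomb Y c | c : {ffun 'I_k -> F2}].

Definition in_ball (m n : nat) (p : R) (X Z : mat m n) : bool :=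
  if Rle_dec (INR (rk_diff X Z)) (p * INR n) then true else false.

Definition L_C (m n : nat) (p : R) (C : {set mat m n}) (X : mat m n) : nat :=
  #|[set Z in C | in_ball p X Z]|.

Definition A_C (m n : nat) (p eps : R) (C : {set mat m n}) (X : mat m n) : R :=
  Rpower 2 (eps / (1 + eps) * INR n * INR (L_C p C X)).

Definition S_C (m n : nat) (p eps : R) (C : {set mat m n}) : R :=
  (\big[Rplus/0%R]_(X : mat m n) A_C p eps C X) / INR #|{: mat m n}|.

Definition good (m n k : nat) (p eps : R) (Y : gens m n k) : bool :=
  if Rle_dec (S_C p eps (span_code Y)) 2 then true else false.

Definition prob_good (m n k : nat) (p eps : R) : R :=
  INR #|[set Y : gens m n k | good p eps Y]| / INR #|{: gens m n k}|.

From mathcomp Require Import all_boot all_order all_algebra all_field zify.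
From Stdlib Require Import Reals Lra.
(* Reals rebinds [^] in nat_scope; re-importing ssrnat restores [expn]. *)
Import ssrnat.
Set Implicit Arguments. Unset Strict Implicit. Unset Printing Implicit Defensive.
Import GRing.Theory.

(* Call the generator tuple Y bad if some ball B_R(X, pn) contains at least
   2^d codewords.  Such a ball then contains d linearly independent codewords
   z_i = sum_j c_ij Y_j; for fixed independent z and coefficients c the fibre
   {Y | lincomb Y c_i = z_i} is a |F_2^{m x n}|^-d fraction of all tuples, so a
   union bound over X, z and c gives P(bad) <= 2^mn (2^k |B| / 2^mn)^d.  Counting
   matrices of rank r <= pn as products A B with an identity block in A gives
   |B| <= (n+1) m^n 2^(pn(m+n-pn)), and k + pn(m+n-pn) = (1-eps) mn, so
   2^k |B| / 2^mn <= 2^(-eps mn/2) for m large; with d > 4/eps, P(bad) <= 2^-mn.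
   For a good code every L_C(X) < 2^d, hence A_C(X) = 1 unless X is within rank
   distance pn of the code, where A_C(X) <= 2^(eps mn/2); those X form a fraction
   at most |C| |B| / 2^mn <= 2^(-eps mn/2), so S_C <= 2. *)

Lemma leq_card_bigcup (T I : finType) (P : pred I) (F : I -> {set T}) :
  #|\bigcup_(i | P i) F i| <= \sum_(i | P i) #|F i|.
Proof.
elim/big_rec2: _ => [|i s A _ le_As]; first by rewrite cards0.
by rewrite (leq_trans (leq_card_setU _ _)) // leq_add2l.
Qed.

(** * Matrices of bounded rank *)

Section RankCount.
Variables (F : finFieldType) (m n : nat).
Local Open Scope ring_scope.

Lemma rank_factor (W : 'M[F]_(m, n)) :
  exists f : {ffun 'I_(\rank W) -> 'I_m}, exists A : 'M[F]_(m, \rank W),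
  exists B : 'M[F]_(\rank W, n), [/\ injective f, rowsub f A = 1%:M & W = A *m B].
Proof.
pose B := rowsub (maxrankfun W) W.
have sWB : (W <= B)%MS by rewrite eq_maxrowsub.
exists (maxrankfun W), (W *m pinvmx B), B; split; first exact: maxrankfun_inj.
  apply: (row_free_inj (maxrowsub_free W)).
  by rewrite mul_rowsub_mx mulmxKpV // mul1mx.
by rewrite mulmxKpV.
Qed.

Lemma card_rowsub_eq1 r (f : 'I_r -> 'I_m) : injective f ->
  (#|[set A : 'M[F]_(m, r) | rowsub f A == 1%:M]| <= #|F| ^ ((m - r) * r))%N.
Proof.
move=> inj_f.
pose rest (A : 'M[F]_(m, r)) : {ffun {i | i \notin codom f} -> 'rV[F]_r} :=
  [ffun i => row (val i) A].
rewrite -(card_in_imset (f := rest)); last first.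
  move=> A1 A2; rewrite !inE => /eqP A1f /eqP A2f /ffunP eqA.
  apply/row_matrixP => i; have [/codomP [j ->]|fNi] := boolP (i \in codom f).
    by rewrite -!row_rowsub A1f A2f.
  by have := eqA (exist _ i fNi); rewrite !ffunE.
rewrite (leq_trans (max_card _)) // card_ffun card_mx mul1n card_sig -expnM.
have -> : #|[pred i | i \notin codom f]| = (m - r)%N.
  have := cardC (mem (codom f)); rewrite card_codom // card_ord (card_ord m) => E.
  by rewrite -[X in _ = (X - _)%N]E addKn; apply: eq_card.
by rewrite mulnC.
Qed.

Lemma card_rank_eq (r : nat) :
  (#|[set W : 'M[F]_(m, n) | \rank W == r]|
     <= m ^ r * (#|F| ^ ((m - r) * r) * #|F| ^ (r * n)))%N.
Proof.
pose factored (f : {ffun 'I_r -> 'I_m}) := [set AB.1 *m AB.2 | AB in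
  setX [set A : 'M[F]_(m, r) | rowsub f A == 1%:M] [set: 'M[F]_(r, n)]].
apply: (@leq_trans #|\bigcup_(f : {ffun 'I_r -> 'I_m} | injectiveb f) factored f|).
  apply/subset_leq_card/subsetP => W; rewrite inE => /eqP rkW; subst r.
  have [f [A [B [inj_f Af1 defW]]]] := rank_factor W.
  apply/bigcupP; exists f; first exact/injectiveP.
  by apply/imsetP; exists (A, B); rewrite // !inE Af1 eqxx.
apply: (leq_trans (leq_card_bigcup _ _)).
apply: (@leq_trans (\sum_(f : {ffun 'I_r -> 'I_m} | injectiveb f)
                     #|F| ^ ((m - r) * r) * #|F| ^ (r * n))%N).
  apply: leq_sum => f /injectiveP inj_f.
  rewrite (leq_trans (leq_imset_card _ _)) // cardsX cardsT card_mx.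
  by rewrite leq_mul2r card_rowsub_eq1 ?orbT.
rewrite [X in (_ <= X)%N](_ : _ = \sum_(f : {ffun 'I_r -> 'I_m})
                     #|F| ^ ((m - r) * r) * #|F| ^ (r * n))%N.
  by rewrite [X in (_ <= X)%N](bigID [pred f : {ffun 'I_r -> 'I_m} | injectiveb f]) leq_addr.
by rewrite sum_nat_const card_ffun !card_ord.
Qed.

Lemma card_rank_pred (P : pred nat) :
  (#|[set W : 'M[F]_(m, n) | P (\rank W)]|
     <= \sum_(r < n.+1 | P r) m ^ r * (#|F| ^ ((m - r) * r) * #|F| ^ (r * n)))%N.
Proof.
apply: (@leq_trans #|\bigcup_(r < n.+1 | P r) [set W : 'M[F]_(m, n) | \rank W == r]|).
  apply/subset_leq_card/subsetP => W; rewrite inE => PW.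
  have rkW : (\rank W < n.+1)%N by rewrite ltnS rank_leq_col.
  by apply/bigcupP; exists (Ordinal rkW); rewrite ?inE.
by apply: (leq_trans (leq_card_bigcup _ _)); apply: leq_sum => r _; apply: card_rank_eq.
Qed.
End RankCount.

(** * Independent codewords and their fibres *)

Section FreeExtraction.
Variables (F : finFieldType) (m n : nat).
Local Notation vT := 'M[F]_(m, n).
Local Open Scope ring_scope.

Lemma exists_free_spanning_subseq (s : seq vT) :
  exists X, [/\ {subset X <= s}, free X & <<X>>%VS = <<s>>%VS].
Proof.
elim: s => [|v s [X [sXs freeX spanX]]]; first by exists [::]; split; rewrite ?nil_free.
have [vX|vNX] := boolP (v \in <<X>>%VS).
  exists X; split=> //; first by move=> x /sXs xs; rewrite inE xs orbT.
  by rewrite span_cons -spanX; apply/esym/addv_idPr; rewrite -memvE.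
exists (v :: X); split; last by rewrite !span_cons spanX.
  by move=> x; rewrite !inE => /predU1P [->|/sXs ->]; rewrite ?eqxx ?orbT.
by rewrite free_cons vNX freeX.
Qed.

Lemma exists_free_family (V : {set vT}) (d : nat) : (#|F| ^ d <= #|V|)%N ->
  exists z : {ffun 'I_d -> vT}, free [tuple z i | i < d] /\ forall i, z i \in V.
Proof.
move=> leVd; have [X [sXV freeX spanX]] := exists_free_spanning_subseq (enum V).
have leXd : (d <= size X)%N.
  rewrite -(leq_exp2l _ _ (card_finNzRing_gt1 F)) (leq_trans leVd) //.
  rewrite -(eqP freeX) -card_vspace spanX.
  by apply/subset_leq_card/subsetP => x xV; rewrite memv_span ?mem_enum.
pose t : d.-tuple vT := Tuple (introT eqP (size_takel leXd)).
exists [ffun i => tnth t i]; split.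
  have -> : [tuple [ffun i => tnth t i] i | i < d] = t.
    by apply: eq_from_tnth => i; rewrite tnth_mktuple ffunE.
  by apply: (catl_free (Y := drop d X)); rewrite cat_take_drop.
by move=> i; rewrite ffunE -mem_enum; apply/sXV/(mem_take (mem_tnth i t)).
Qed.
End FreeExtraction.

Section Fibre.
Variables m n k d : nat.
Local Open Scope ring_scope.

Lemma lincombD (Y1 Y2 : gens m n k) c : lincomb (Y1 + Y2) c = lincomb Y1 c + lincomb Y2 c.
Proof. by rewrite /lincomb -big_split; apply: eq_bigr => i _; rewrite ffunE scalerDr. Qed.

Lemma lincombN (Y : gens m n k) c : lincomb (- Y) c = - lincomb Y c.
Proof. by rewrite /lincomb -sumrN; apply: eq_bigr => i _; rewrite ffunE scalerN. Qed.

Lemma lincomb_sum (Y : gens m n k) (a : 'I_d -> F2) (c : 'I_d -> {ffun 'I_k -> F2}) :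
  \sum_i a i *: lincomb Y (c i) = lincomb Y [ffun j => \sum_i a i * c i j].
Proof.
rewrite /lincomb; under eq_bigr do rewrite scaler_sumr.
rewrite exchange_big; apply: eq_bigr => j _; rewrite ffunE scaler_suml.
by apply: eq_bigr => i _; rewrite scalerA.
Qed.

Variable c : {ffun 'I_d -> {ffun 'I_k -> F2}}.

Definition fibre (z : {ffun 'I_d -> mat m n}) : {set gens m n k} :=
  [set Y | [forall i, lincomb Y (c i) == z i]].

Lemma coefs_row_free (z : {ffun 'I_d -> mat m n}) (Y : gens m n k) :
  free [tuple z i | i < d] -> Y \in fibre z -> row_free (\matrix_(i, j) c i j).
Proof.
move=> /freeP free_z /[!inE] /forallP Yz; apply/inj_row_free => v vC0; apply/rowP => i.
rewrite mxE; apply: (free_z (fun i => v 0 i)) => {i}.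
under eq_bigr => i _ do rewrite nth_mktuple -(eqP (Yz i)).
rewrite lincomb_sum /lincomb big1 // => j _; rewrite ffunE.
suff -> : \sum_i v 0 i * c i j = 0 by rewrite scale0r.
have /rowP/(_ j) := vC0; rewrite !mxE => vCj.
by rewrite -[RHS]vCj; apply: eq_bigr => i _; rewrite mxE.
Qed.

Lemma lincomb_combine (D : 'M[F2]_(k, d)) (z : {ffun 'I_d -> mat m n}) i :
  lincomb [ffun j => \sum_l D j l *: z l] (c i)
  = \sum_l ((\matrix_(i, j) c i j) *m D) i l *: z l.
Proof.
rewrite /lincomb; under eq_bigr do rewrite ffunE scaler_sumr.
rewrite exchange_big; apply: eq_bigr => l _; rewrite mxE scaler_suml.
by apply: eq_bigr => j _; rewrite scalerA mxE.
Qed.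

Lemma card_fibre (z : {ffun 'I_d -> mat m n}) : free [tuple z i | i < d] ->
  (#|fibre z| * #|mat m n| ^ d <= #|gens m n k|)%N.
Proof.
move=> free_z; have [->|[Y0 Y0z]] := set_0Vmem (fibre z); first by rewrite cards0.
have [D CD] := row_freeP (coefs_row_free free_z Y0z).
move: Y0z; rewrite inE => /forallP Y0i.
pose lift (z' : {ffun 'I_d -> mat m n}) : gens m n k := [ffun j => \sum_l D j l *: z' l].
have lincomb_lift z' i : lincomb (lift z') (c i) = z' i.
  rewrite lincomb_combine CD (bigD1 i) //= big1 => [|l /negbTE li].
    by rewrite mxE eqxx scale1r addr0.
  by rewrite mxE eq_sym li scale0r.
(* [Y |-> Y - Y0 + lift z'] moves the fibre over [z] onto the fibre over [z'],
   and is injective jointly in [(z', Y)]. *)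
pose shift (zY : {ffun 'I_d -> mat m n} * gens m n k) := zY.2 - Y0 + lift zY.1.
have lincomb_shift zY i :
    lincomb (shift zY) (c i) = lincomb zY.2 (c i) - lincomb Y0 (c i) + zY.1 i.
  by rewrite !lincombD lincombN lincomb_lift.
rewrite -[d in (_ ^ d)%N]card_ord -card_ffun mulnC -cardsT -cardsX.
rewrite -(card_in_imset (f := shift)) ?max_card // => [[z1 Y1] [z2 Y2]].
rewrite !inE /= => /forallP Y1z /forallP Y2z eq_shift.
have ez : z1 = z2.
  apply/ffunP => i; have := congr1 (fun Y => lincomb Y (c i)) eq_shift.
  by rewrite !lincomb_shift (eqP (Y1z i)) (eqP (Y2z i)) (eqP (Y0i i)) subrr !add0r.
by move: eq_shift; rewrite /shift ez /= => /addIr /addIr ->.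
Qed.
End Fibre.

(** * Rank balls and bad generator tuples *)

Section Balls.
Variables (m n : nat) (p : R).

Definition small_rank : pred nat := fun r => if Rle_dec (INR r) (p * INR n) then true else false.

Definition ball (X : mat m n) : {set mat m n} := [set Z | in_ball p X Z].

Lemma in_ballC (X Z : mat m n) : in_ball p X Z = in_ball p Z X.
Proof. by rewrite /in_ball /rk_diff -GRing.opprB mxrank_opp. Qed.

Definition ball_bound : nat :=
  \sum_(r < n.+1 | small_rank r) m ^ r * (2 ^ ((m - r) * r) * 2 ^ (r * n)).

Lemma card_ball (X : mat m n) : #|ball X| <= ball_bound.
Proof.
have := card_rank_pred F2 m n small_rank; rewrite card_Fp // => le_rank.
apply: leq_trans le_rank; rewrite -(card_imset _ (can_inj (subKr X))).
by apply/subset_leq_card/subsetP => _ /imsetP [Z /[!inE] XZ ->].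
Qed.
End Balls.

Section BadGenerators.
Variables (m n k d : nat) (p : R).

Definition bad_gens : {set gens m n k} :=
  [set Y | [exists X, 2 ^ d <= L_C p (span_code Y) X]].

Lemma bad_gens_sub : bad_gens \subset
  \bigcup_(X : mat m n)
    \bigcup_(z : {ffun 'I_d -> mat m n} | (z \in ffun_on (ball p X)) && free [tuple z i | i < d])
      \bigcup_(c : {ffun 'I_d -> {ffun 'I_k -> F2}}) fibre c z.
Proof.
have card_F2 : #|F2| = 2 by rewrite card_Fp.
apply/subsetP => Y /[!inE] /existsP [X]; rewrite -[X in X ^ d <= _]card_F2.
move=> /exists_free_family [z [free_z zV]].
have zY i : z i \in span_code Y by have := zV i; rewrite inE => /andP [].
have zX i : z i \in ball p X by have := zV i; rewrite !inE => /andP [].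
have /fin_all_exists [c cz] : forall i, exists c, lincomb Y c = z i.
  by move=> i; have /imsetP [c _ ->] := zY i; exists c.
apply/bigcupP; exists X => //; apply/bigcupP; exists z.
  by rewrite free_z andbT; apply/ffun_onP.
by apply/bigcupP; exists [ffun i => c i] => //; rewrite inE; apply/forallP => i; rewrite ffunE cz.
Qed.

Lemma card_bad_gens (B : nat) : (forall X : mat m n, #|ball p X| <= B) ->
  #|bad_gens| * #|mat m n| ^ d <= #|mat m n| * (2 ^ k * B) ^ d * #|gens m n k|.
Proof.
move=> ballB; set G := #|gens m n k|.
rewrite expnMn -expnM (mulnC (2 ^ (k * d))).
have card_coefs : #|{: {ffun 'I_d -> {ffun 'I_k -> F2}}}| = 2 ^ (k * d).
  by rewrite !card_ffun card_Fp // -expnM; congr (2 ^ (_ * _)); apply: card_ord.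
rewrite (leq_trans (leq_mul (subset_leq_card bad_gens_sub) (leqnn _))) //.
rewrite (leq_trans (leq_mul (leq_card_bigcup _ _) (leqnn _))) // big_distrl /=.
rewrite -!mulnA -sum_nat_const leq_sum // => X _.
rewrite (leq_trans (leq_mul (leq_card_bigcup _ _) (leqnn _))) // big_distrl /=.
apply: (@leq_trans (\sum_(z : {ffun 'I_d -> mat m n} | z \in ffun_on (ball p X)) 2 ^ (k * d) * G));
  last first.
  rewrite sum_nat_const card_ffun_on card_ord leq_mul2r; apply/orP; right.
  by have [->|d_gt0] := posnP d; rewrite ?expn0 ?leq_exp2r ?ballB.
rewrite big_mkcondr leq_sum // => z _; case: ifP => // /card_fibre free_z.
rewrite (leq_trans (leq_mul (leq_card_bigcup _ _) (leqnn _))) // big_distrl /=.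
by rewrite -card_coefs -sum_nat_const leq_sum.
Qed.
End BadGenerators.

Local Open Scope R_scope.

Lemma INR_muln a b : INR (a * b) = INR a * INR b.
Proof. by rewrite mulnE mult_INR. Qed.

Lemma INR_addn a b : INR (a + b) = INR a + INR b.
Proof. by rewrite addnE plus_INR. Qed.

Lemma INR_subn a b : (b <= a)%N -> INR (a - b) = INR a - INR b.
Proof. by move=> /leP le_ba; rewrite -minus_INR. Qed.

Lemma INR_expn a b : INR (a ^ b) = INR a ^ b.
Proof. by elim: b => [|b IHb]; rewrite ?expnS ?INR_muln ?IHb. Qed.

Lemma INR_exp2 e : INR (2 ^ e) = Rpower 2 (INR e).
Proof. by rewrite INR_expn Rpower_pow //; lra. Qed.

Lemma Rpower2_le x y : x <= y -> Rpower 2 x <= Rpower 2 y.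
Proof. by move=> le_xy; apply: Rle_Rpower => //; lra. Qed.

Lemma Rpower2_pow x d : Rpower 2 x ^ d = Rpower 2 (INR d * x).
Proof. by rewrite -Rpower_pow ?Rpower_mult 1?Rmult_comm //; apply: exp_pos. Qed.

Lemma card_mat_INR m n : INR #|{: mat m n}| = Rpower 2 (INR m * INR n).
Proof. by rewrite card_mx card_Fp // INR_exp2 INR_muln. Qed.

Lemma card_gens_INR m n k : INR #|{: gens m n k}| = Rpower 2 (INR k * (INR m * INR n)).
Proof. by rewrite card_ffun card_ord INR_expn card_mat_INR Rpower2_pow. Qed.

Lemma Rsum_le (I : finType) (f g : I -> R) : (forall i, f i <= g i) ->
  \big[Rplus/0]_(i : I) f i <= \big[Rplus/0]_(i : I) g i.
Proof.
move=> le_fg; apply: (big_rec2 (fun x y => x <= y)) => [|i x y _]; first lra.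
by apply: Rplus_le_compat.
Qed.

Lemma Rsum_affine (I : finType) (a b : R) (h : I -> nat) :
  \big[Rplus/0]_(i : I) (a + b * INR (h i)) = a * INR #|I| + b * INR (\sum_(i : I) h i).
Proof.
rewrite -sum1_card.
apply: (big_rec3 (fun x y z => x = a * INR y + b * INR z)) => [|i x y z _ ->].
  by rewrite /=; ring.
by rewrite !INR_addn; simpl INR; ring.
Qed.

Lemma S_C_le m n (p eps : R) (C : {set mat m n}) (d B : nat) : 0 <= eps ->
  (forall X, L_C p C X < 2 ^ d)%N -> (forall Z : mat m n, #|ball p Z| <= B)%N ->
  S_C p eps C <= 1 + Rpower 2 (eps / (1 + eps) * INR n * INR (2 ^ d))
                     * INR (#|C| * B) / INR #|{: mat m n}|.
Proof.
move=> eps_ge0 L_C_lt ballB; set M := Rpower 2 _.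
set S := \bigcup_(Z in C) ball p Z.
have rate_ge0 : 0 <= eps / (1 + eps) * INR n.
  by apply/Rmult_le_pos/pos_INR/Rmult_le_pos/Rlt_le/Rinv_0_lt_compat; lra.
have A_C_le X : A_C p eps C X <= 1 + M * INR (X \in S).
  have [XS|XNS] := boolP (X \in S).
    rewrite Rmult_1_r; suff : A_C p eps C X <= M by lra.
    by apply/Rpower2_le/Rmult_le_compat_l/le_INR/leP/ltnW.
  suff L0 : L_C p C X = 0%N by rewrite /A_C L0 Rmult_0_r Rpower_O /=; lra.
  apply/eqP; rewrite cards_eq0; apply/eqP/setP => Z; rewrite !inE.
  apply: contraNF XNS => /andP [ZC XZ]; apply/bigcupP; exists Z => //.
  by rewrite inE in_ballC.
have card_S : (\sum_X (X \in S) <= #|C| * B)%N.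
  apply: (@leq_trans #|S|).
    rewrite -sum1_card [X in (_ <= X)%N]big_mkcond /=.
    by apply: leq_sum => X _; case: (X \in S).
  by rewrite (leq_trans (leq_card_bigcup _ _)) // -sum_nat_const leq_sum.
have mat_pos : 0 < INR #|{: mat m n}| by rewrite card_mat_INR; apply: exp_pos.
apply: (Rle_trans _ ((INR #|{: mat m n}| + M * INR (#|C| * B)) / INR #|{: mat m n}|)).
  apply/Rmult_le_compat_r/(Rle_trans _ _ _ (Rsum_le A_C_le)); first exact/Rlt_le/Rinv_0_lt_compat.
  rewrite Rsum_affine Rmult_1_l; apply/Rplus_le_compat_l/Rmult_le_compat_l/le_INR/leP => //.
  exact/Rlt_le/exp_pos.
by right; field; lra.
Qed.

Lemma INR_sum_le (N : nat) (P : pred 'I_N) (f : 'I_N -> nat) (T : R) : 0 <= T ->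
  (forall i, P i -> INR (f i) <= T) -> INR (\sum_(i < N | P i) f i) <= INR N * T.
Proof.
move=> T_ge0 le_fT.
have sum1N : (\sum_(i < N) 1 = N)%N by rewrite big_const_ord iter_addn_0 mul1n.
rewrite big_mkcond -[X in _ <= INR X * T]sum1N.
apply: (big_rec2 (fun x y => INR x <= INR y * T)) => [|i x y _ le_xy]; first by rewrite /=; lra.
rewrite !INR_addn /=; case: ifP => [/le_fT|_] /=; lra.
Qed.

(* [x |-> x (M + N - x)] increases on [[0, (M + N) / 2]], which contains [x <= u] *)
Lemma rank_exponent_le (x u M N : R) : 0 <= x <= u -> u <= N -> N <= M ->
  (M - x) * x + x * N <= u * (M + N - u).
Proof.
move=> x0u uN NM; have : 0 <= (u - x) * (M + N - u - x) by apply: Rmult_le_pos; lra.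
have -> : (M - x) * x + x * N = u * (M + N - u) - (u - x) * (M + N - u - x) by ring.
lra.
Qed.

Lemma rank_term_le m n (p : R) (r : nat) : (n < m)%N -> 0 <= p <= 1 ->
  (r <= n)%N -> INR r <= p * INR n ->
  INR (m ^ r * (2 ^ ((m - r) * r) * 2 ^ (r * n)))
    <= INR m ^ n * Rpower 2 (p * INR n * (INR m + INR n - p * INR n)).
Proof.
move=> lt_nm p01 le_rn le_r_pn.
have le_nm : (INR n + 1 <= INR m) by rewrite -S_INR; apply/le_INR/leP.
have le_r_n : INR r <= INR n by apply/le_INR/leP.
have le_pn_n : p * INR n <= INR n.
  by have := Rmult_le_compat_r _ _ _ (pos_INR n) (proj2 p01); lra.
have r_ge0 := pos_INR r.
rewrite !INR_muln !INR_exp2 -Rpower_plus !INR_muln INR_subn; last exact/(leq_trans le_rn)/ltnW.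
rewrite INR_expn; apply: Rmult_le_compat; [exact/pow_le/pos_INR | exact/Rlt_le/exp_pos | |].
  by apply: Rle_pow; [lra | exact/leP].
by apply/Rpower2_le/rank_exponent_le; lra.
Qed.

Lemma ball_bound_le m n (p : R) : (n < m)%N -> 0 <= p <= 1 ->
  INR (ball_bound m n p)
    <= INR n.+1 * (INR m ^ n * Rpower 2 (p * INR n * (INR m + INR n - p * INR n))).
Proof.
move=> lt_nm p01; apply: (INR_sum_le (N := n.+1)) => [|r].
  by apply: Rmult_le_pos; [apply/pow_le/pos_INR | apply/Rlt_le/exp_pos].
rewrite /small_rank; case: Rle_dec => // le_r_pn _.
by apply: rank_term_le => //; rewrite -ltnS.
Qed.

Lemma ln2_gt0 : 0 < ln 2.
Proof. by have := ln_lt_2; lra. Qed.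

(* [2 ^ (a x) = exp (c x) >= (c x / 4) ^ 4] with [c = a ln 2],
   and [(c x / 4) ^ 4 >= x ^ 2] once [x >= 16 / c ^ 2]. *)
Lemma sqr_le_Rpower2 (a : R) : 0 < a ->
  exists M : nat, forall x, INR M <= x -> x * x <= Rpower 2 (a * x).
Proof.
move=> a_gt0; set c := a * ln 2.
have c_gt0 : 0 < c by apply: Rmult_lt_0_compat => //; apply: ln2_gt0.
have [M ltM] := INR_unbounded (16 / (c * c)); exists M => x le_Mx.
have cc_gt0 : 0 < c * c by apply: Rmult_lt_0_compat.
have cx_ge16 : 16 <= c * c * x.
  have := Rmult_lt_compat_l _ _ _ cc_gt0 (Rlt_le_trans _ _ _ ltM le_Mx).
  have -> : c * c * (16 / (c * c)) = 16 by field; apply: Rgt_not_eq.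
  lra.
set y := c * x / 4.
have y_ge0 : 0 <= y by rewrite /y; nra.
have -> : Rpower 2 (a * x) = exp y ^ 4.
  rewrite -Rpower_pow; last exact: exp_pos.
  by rewrite /Rpower ln_exp /y /c; simpl INR; f_equal; field.
have y_le : y <= exp y by have := exp_ineq1_le y; lra.
apply: Rle_trans _ (pow_incr _ _ 4 (conj y_ge0 y_le)).
have -> : y ^ 4 = x * x * ((c * c * x / 16) * (c * c * x / 16)) by rewrite /y; field.
have : 1 <= (c * c * x / 16) * (c * c * x / 16) by nra.
have : 0 <= x * x by nra.
nra.
Qed.

Lemma code_ball_volume_le m n k (p eps : R) :
  0 <= p <= 1 -> (0 < n)%N -> (n < m)%N ->
  INR m * INR m <= Rpower 2 (eps / 2 * INR m) ->
  INR k = ((1 - p) * (1 - INR n / INR m * p) - eps) * INR m * INR n ->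
  INR (2 ^ k * ball_bound m n p) <= Rpower 2 (INR m * INR n - eps * (INR m * INR n) / 2).
Proof.
move=> p01 n_gt0 lt_nm sqr_m defk.
have le_nm : INR n + 1 <= INR m by rewrite -S_INR; apply/le_INR/leP.
have n_ge1 : 1 <= INR n by apply/(le_INR 1)/leP.
have poly_le : INR n.+1 * INR m ^ n <= Rpower 2 (eps * (INR m * INR n) / 2).
  apply: (Rle_trans _ (INR m ^ n.+1)).
    by rewrite S_INR; apply: Rmult_le_compat_r; [apply: pow_le |]; lra.
  apply: (Rle_trans _ ((INR m * INR m) ^ n)).
    rewrite (_ : INR m * INR m = INR m ^ 2) -?pow_mult; last by ring.
    by apply: Rle_pow; [lra | apply/leP; lia].
  apply: (Rle_trans _ _ _ (pow_incr _ _ n (conj (Rle_0_sqr _) sqr_m))).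
  by rewrite Rpower2_pow; right; f_equal; field.
have exponent : INR k + p * INR n * (INR m + INR n - p * INR n)
                = INR m * INR n - eps * (INR m * INR n).
  by rewrite defk; field; lra.
rewrite INR_muln INR_exp2.
have ball_le := ball_bound_le lt_nm p01.
apply: (Rle_trans _ _ _ (Rmult_le_compat_l _ _ _ (Rlt_le _ _ (exp_pos _)) ball_le)).
rewrite -Rmult_assoc -Rmult_assoc.
apply: (Rle_trans _ (Rpower 2 (INR k) * Rpower 2 (eps * (INR m * INR n) / 2)
                     * Rpower 2 (p * INR n * (INR m + INR n - p * INR n)))).
  apply: Rmult_le_compat_r; first exact/Rlt_le/exp_pos.
  by rewrite Rmult_assoc; apply: Rmult_le_compat_l; first exact/Rlt_le/exp_pos.
by rewrite -!Rpower_plus; apply: Rpower2_le; lra.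
Qed.

Lemma card_span_code m n k (Y : gens m n k) : (#|span_code Y| <= 2 ^ k)%N.
Proof. by rewrite (leq_trans (leq_imset_card _ _)) // card_ffun card_Fp // card_ord. Qed.

Lemma Rdiv_le_1 x y : 0 < y -> x <= y -> x / y <= 1.
Proof.
move=> y_gt0 le_xy; apply: (Rmult_le_reg_r y) => //.
by rewrite /Rdiv Rmult_assoc Rinv_l ?Rmult_1_l ?Rmult_1_r //; apply: Rgt_not_eq.
Qed.

Section GoodCodes.
Variables (m n k d : nat) (p eps : R).
Let N := INR m * INR n.
Hypotheses (eps_gt0 : 0 < eps) (le_2d_m : (2 ^ d.+1 <= m)%N)
  (volume : INR (2 ^ k * ball_bound m n p) <= Rpower 2 (N - eps * N / 2)).

Lemma good_of_not_bad (Y : gens m n k) : Y \notin bad_gens m n k d p -> good p eps Y.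
Proof.
move=> Y_good; set C := span_code Y.
have L_small X : (L_C p C X < 2 ^ d)%N.
  by rewrite ltnNge; apply: contra Y_good => L_big; rewrite inE; apply/existsP; exists X.
have rate_le : eps / (1 + eps) * INR n * INR (2 ^ d) <= eps * N / 2.
  have le_rate : eps / (1 + eps) <= eps.
    rewrite /Rdiv -[X in _ <= X]Rmult_1_r; apply: Rmult_le_compat_l; first lra.
    by rewrite -Rinv_1; apply: Rinv_le_contravar; lra.
  have le_2d : 2 * INR (2 ^ d) <= INR m by rewrite -(INR_muln 2) -expnS; apply/le_INR/leP.
  have : 0 <= (eps - eps / (1 + eps)) * (INR n * INR (2 ^ d)).
    by apply: Rmult_le_pos; [lra | apply/Rmult_le_pos/pos_INR/pos_INR].
  have : 0 <= eps * INR n * (INR m - 2 * INR (2 ^ d)).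
    by apply: Rmult_le_pos; [apply/Rmult_le_pos/pos_INR; lra | lra].
  rewrite /N; lra.
have volume_C : Rpower 2 (eps / (1 + eps) * INR n * INR (2 ^ d)) * INR (#|C| * ball_bound m n p)
                <= Rpower 2 N.
  apply: (Rle_trans _ (Rpower 2 (eps * N / 2) * Rpower 2 (N - eps * N / 2))); last first.
    by rewrite -Rpower_plus; apply: Rpower2_le; lra.
  apply: Rmult_le_compat; [exact/Rlt_le/exp_pos | exact: pos_INR | exact: Rpower2_le |].
  apply: Rle_trans volume; rewrite !INR_muln.
  by apply/Rmult_le_compat_r/le_INR/leP/card_span_code; apply: pos_INR.
have := S_C_le (Rlt_le _ _ eps_gt0) L_small (card_ball p).
rewrite /good card_mat_INR -/N; case: Rle_dec => // S_gt2 S_le; exfalso; apply: S_gt2.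
apply: (Rle_trans _ _ _ S_le); have := exp_pos (N * ln 2).
rewrite -/(Rpower 2 N) => pos; have := Rdiv_le_1 pos volume_C; lra.
Qed.

Lemma prob_bad_gens_le : 4 < INR d * eps ->
  INR #|bad_gens m n k d p| / INR #|{: gens m n k}| <= Rpower 2 (- N).
Proof.
move=> d_eps; have N_ge0 : 0 <= N by apply/Rmult_le_pos/pos_INR/pos_INR.
have volume_d : INR ((2 ^ k * ball_bound m n p) ^ d) <= Rpower 2 (INR d * (N - eps * N / 2)).
  by rewrite INR_expn -Rpower2_pow; apply/pow_incr; split; [apply: pos_INR | apply: volume].
have := le_INR _ _ (leP (card_bad_gens k d (@card_ball m n p))).
rewrite !INR_muln [INR (_ ^ d)]INR_expn card_mat_INR Rpower2_pow card_gens_INR -/N => count.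
apply: (Rmult_le_reg_r (Rpower 2 (INR k * N))); first exact: exp_pos.
rewrite /Rdiv Rmult_assoc Rinv_l ?Rmult_1_r; last exact/Rgt_not_eq/exp_pos.
apply: (Rmult_le_reg_r (Rpower 2 (INR d * N))); first exact: exp_pos.
apply: (Rle_trans _ _ _ count); rewrite -!Rpower_plus.
apply: (Rle_trans _ (Rpower 2 N * Rpower 2 (INR d * (N - eps * N / 2)) * Rpower 2 (INR k * N))).
  apply: Rmult_le_compat_r; first exact/Rlt_le/exp_pos.
  by apply: Rmult_le_compat_l; first exact/Rlt_le/exp_pos.
rewrite -!Rpower_plus; apply: Rpower2_le.
have : 4 * N <= INR d * eps * N by apply: Rmult_le_compat_r; lra.
lra.
Qed.
End GoodCodes.

Lemma prob_good_ge m n k (p eps : R) (S : {set gens m n k}) :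
  (forall Y, Y \notin S -> good p eps Y) ->
  1 - INR #|S| / INR #|{: gens m n k}| <= prob_good m n k p eps.
Proof.
move=> goodS; rewrite /prob_good; set G := [set Y | good p eps Y].
have le_GS : (#|{: gens m n k}| <= #|G| + #|S|)%N.
  rewrite -(cardsC G) leq_add2l; apply/subset_leq_card/subsetP => Y.
  by rewrite !inE; apply: contraR => /goodS ->.
have gens_gt0 : 0 < INR #|{: gens m n k}| by rewrite card_gens_INR; apply: exp_pos.
have -> : 1 - INR #|S| / INR #|{: gens m n k}|
          = (INR #|{: gens m n k}| - INR #|S|) / INR #|{: gens m n k}|.
  by field; apply: Rgt_not_eq.
apply/Rmult_le_compat_r; first exact/Rlt_le/Rinv_0_lt_compat.
by have := le_INR _ _ (leP le_GS); rewrite INR_addn; lra.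
Qed.

Theorem lemma5 (p eps : R) (hp0 : (0 < p)%R) (hp1 : (p < 1)%R) (heps : (0 < eps)%R) :
  exists c : R, (0 < c)%R /\
  exists N : nat, forall m n k : nat,
    (N <= n)%N -> (n < m)%N ->
    INR k = (((1 - p) * (1 - (INR n / INR m) * p) - eps) * INR m * INR n)%R ->
    (1 - exp (- (c * INR n)) <= prob_good m n k p eps)%R.
Proof.
have [d lt_d] := INR_unbounded (4 / eps).
have [M sqr_le] := sqr_le_Rpower2 (Rdiv_lt_0_compat _ 2 heps Rlt_0_2).
exists (ln 2); split; first exact: ln2_gt0.
exists (maxn 1 (maxn M (2 ^ d.+1))) => m n k; rewrite !geq_max => /and3P [n_gt0 le_Mn le_2dn].
move=> lt_nm defk; have le_nm := ltnW lt_nm.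
have volume := code_ball_volume_le (conj (Rlt_le _ _ hp0) (Rlt_le _ _ hp1)) n_gt0 lt_nm
  (sqr_le _ (le_INR _ _ (leP (leq_trans le_Mn le_nm)))) defk.
have d_eps : 4 < INR d * eps.
  by have := Rmult_lt_compat_r _ _ _ heps lt_d; rewrite /Rdiv Rmult_assoc Rinv_l; lra.
have prob_bad := prob_bad_gens_le volume d_eps.
apply: (Rle_trans _ _ _ _ (prob_good_ge (good_of_not_bad heps (leq_trans le_2dn le_nm) volume))).
have : Rpower 2 (- (INR m * INR n)) <= Rpower 2 (- INR n).
  apply/Rpower2_le/Ropp_le_contravar; rewrite -[X in X <= _]Rmult_1_l.
  apply: Rmult_le_compat_r; first exact: pos_INR.
  exact/(le_INR 1)/leP/(leq_trans n_gt0).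
by rewrite {2}/Rpower (_ : - INR n * ln 2 = - (ln 2 * INR n)); [lra | ring].
Qed.
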